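(* Let $H$ be a compact subgroup of a locally compact group $G$, and let $l$ be a length function on $G$ which is bounded on $H$. Then there exists a length function $l'$ on $G$ such that: (i) $l$ and $l'$ are equivalent; (ii) the kernel $\{g\in G: l'(g)=0\}$ of $l'$ contains $H$, i.e. $l'$ is a length function on the pair $(G,H)$; (iii) if $l$ is locally bounded (resp. proper), then $l'$ is locally bounded (resp. proper), both as a length function on $G$ and as a length function on the pair $(G,H)$.
   Context: A length function on a locally compact group $G$ is a Borel function $l:G\to[0,\infty)$ with $l(e)=0$, $l(g)=l(g^{-1})$ and $l(gh)\le l(g)+l(h)$ for all $g,h$. A length function on the pair $(G,H)$ is a length function on $G$ vanishing on $H$ (it is then bi-$H$-invariant and induces a function on $H\backslash G$). A length function is locally bounded if it is bounded on every compact subset of $G$ (resp. the induced function on $H\backslash G$ is bounded on every compact subset of $H\backslash G$), and proper if $l^{-1}([0,n])$ is relatively compact in $G$ (resp. its image is relatively compact in $H\backslash G$) for every $n$. Two length functions $l_1,l_2$ are equivalent if there are constants $c_0,c_1\ge0$ with $l_2\le c_1l_1+c_0$ and $l_1\le c_1l_2+c_0$ on $G$. *)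

From HB Require Import structures.
From mathcomp Require Import all_boot all_order all_algebra.
From mathcomp Require Import all_classical all_reals all_analysis.
Set Implicit Arguments. Unset Strict Implicit. Unset Printing Implicit Defensive.
Import Order.TTheory GRing.Theory Num.Theory.
Local Open Scope classical_set_scope.
Local Open Scope ring_scope.

Definition is_lc_group (G : topologicalType) (mul : G -> G -> G) (inv : G -> G)
    (e : G) : Prop :=
  (forall x y z, mul x (mul y z) = mul (mul x y) z) /\
  (forall x, mul e x = x /\ mul x e = x) /\
  (forall x, mul (inv x) x = e /\ mul x (inv x) = e) /\
  continuous (fun p : G * G => mul p.1 p.2) /\
  continuous inv /\
  locally_compact [set: G] /\ hausdorff_space G.

Definition is_compact_subgroup (G : topologicalType) (mul : G -> G -> G)
    (inv : G -> G) (e : G) (H : set G) : Prop :=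
  [/\ H e, (forall x y, H x -> H y -> H (mul x y)),
      (forall x, H x -> H (inv x)) & compact H].

Definition borel_fun (G : topologicalType) (R : realType) (l : G -> R) : Prop :=
  forall B : set R, measurable B -> <<s [set U : set G | open U] >> (l @^-1` B).

Definition length_fun (G : topologicalType) (R : realType) (mul : G -> G -> G)
    (inv : G -> G) (e : G) (l : G -> R) : Prop :=
  [/\ borel_fun l, (forall g, 0 <= l g), l e = 0,
      (forall g, l g = l (inv g)) &
      (forall g h, l (mul g h) <= l g + l h)].

Definition equiv_length (G : Type) (R : realType) (l1 l2 : G -> R) : Prop :=
  exists c0 c1 : R, [/\ 0 <= c0, 0 <= c1,
    (forall g, l2 g <= c1 * l1 g + c0) & (forall g, l1 g <= c1 * l2 g + c0)].

Definition loc_bounded (G : topologicalType) (R : realType) (l : G -> R) : Prop :=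
  forall K : set G, compact K -> exists M : R, forall g, K g -> l g <= M.

Definition proper_len (G : topologicalType) (R : realType) (l : G -> R) : Prop :=
  forall n : nat, compact (closure (l @^-1` [set x | x <= n%:R])).

(* ---- on the quotient H\G (right cosets Hg), described through G ----
   Open sets of H\G (quotient topology) correspond to open subsets of G
   that are left-H-saturated; a subset of H\G corresponds to its (saturated)
   preimage in G. *)
Definition saturated (G : Type) (mul : G -> G -> G) (H : set G) (A : set G) :=
  forall h g, H h -> A g -> A (mul h g).

Definition qopen (G : topologicalType) (mul : G -> G -> G) (H : set G)
    (U : set G) := open U /\ saturated mul H U.

(* the image of A in H\G is compact *)
Definition qcompact (G : topologicalType) (mul : G -> G -> G) (H : set G)
    (A : set G) : Prop :=
  forall (I : Type) (F : I -> set G), (forall i, qopen mul H (F i)) ->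
    A `<=` \bigcup_(i in [set: I]) F i ->
    exists D : set I, finite_set D /\ A `<=` \bigcup_(i in D) F i.

(* preimage in G of the closure in H\G of the image of A *)
Definition qclosure (G : topologicalType) (mul : G -> G -> G) (H : set G)
    (A : set G) : set G :=
  [set g | forall U, qopen mul H U -> U g -> U `&` A !=set0].

(* induced function on H\G bounded on compact subsets of H\G *)
Definition loc_bounded_pair (G : topologicalType) (R : realType)
    (mul : G -> G -> G) (H : set G) (l : G -> R) : Prop :=
  forall S : set G, saturated mul H S -> qcompact mul H S ->
    exists M : R, forall g, S g -> l g <= M.

(* the image of l^-1([0,n]) is relatively compact in H\G *)
Definition proper_len_pair (G : topologicalType) (R : realType)
    (mul : G -> G -> G) (H : set G) (l : G -> R) : Prop :=
  forall n : nat, qcompact mul H (qclosure mul H (l @^-1` [set x | x <= n%:R])).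

(* The new length function vanishes on H and, off H, is the lower
   semicontinuous envelope of g |-> sup_(h, h' in H) l (h g h').  Lower
   semicontinuity makes it Borel, taking the envelope along neighbourhoods of
   products keeps it subadditive, and it exceeds l by at most 2 sup_H l.
   Conversely, l is bounded by some C on a neighbourhood O of the identity:
   this is Pettis' theorem, obtained from the Baire category theorem for
   locally compact spaces because the sublevel sets of l are Borel.  Hence
   l <= l' + C + sup_H l, and finitely many translates of O bound l' on any
   compact subset of H\G. *)

From HB Require Import structures.
From mathcomp Require Import all_boot all_order all_algebra.
From mathcomp Require Import all_classical all_reals all_analysis.
From mathcomp Require finmap.
From mathcomp Require Import lra.
Import Order.TTheory GRing.Theory Num.Theory.
Local Open Scope classical_set_scope.
Local Open Scope ring_scope.
Set Implicit Arguments. Unset Strict Implicit. Unset Printing Implicit Defensive.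

Section Meager.
Variable T : topologicalType.

Definition closed_nowhere_dense (F : set T) :=
  closed F /\ forall U, open U -> U `<=` F -> U = set0.

Definition meager (A : set T) :=
  exists F : nat -> set T,
    (forall n, closed_nowhere_dense (F n)) /\ A `<=` \bigcup_n F n.

Lemma meagerS A B : A `<=` B -> meager B -> meager A.
Proof. by move=> AB [F [nF BF]]; exists F; split => // x /AB /BF. Qed.

Lemma closed_nowhere_dense0 : closed_nowhere_dense set0.
Proof. by split; [exact: closed0 | move=> U _; rewrite subset0]. Qed.

Lemma meager0 : meager set0.
Proof. by exists (fun=> set0); split => [n|//]; exact: closed_nowhere_dense0. Qed.

Lemma meager_bigcup (A : nat -> set T) :
  (forall n, meager (A n)) -> meager (\bigcup_n A n).
Proof.
move=> mA; have [F hF] := choice mA.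
exists (fun k =>
  if @unpickle (nat * nat)%type k is Some p then F p.1 p.2 else set0).
split.
  move=> k; case: (unpickle k) => [[n m]|]; last exact: closed_nowhere_dense0.
  by have [+ _] := hF n; apply.
move=> x [n _ /(proj2 (hF n))] [m _ Fx].
by exists (pickle (n, m)) => //; rewrite pickleK.
Qed.

Lemma meagerU A B : meager A -> meager B -> meager (A `|` B).
Proof.
move=> mA mB; apply: (@meagerS _ (\bigcup_n (if n is 0 then A else B))).
  by move=> x [Ax|Bx]; [exists 0%N | exists 1%N].
by apply: meager_bigcup => -[|n].
Qed.

Lemma closed_nowhere_dense_meager N : closed_nowhere_dense N -> meager N.
Proof.
move=> nN; apply: (@meagerS _ (N `|` set0)); first by move=> x; left.
by apply: meagerU meager0; exists (fun=> N); split => // x Nx; exists 0%N.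
Qed.

Lemma closed_boundary_nowhere_dense C :
  closed C -> closed_nowhere_dense (C `\` C°).
Proof.
move=> cC; split.
  by rewrite setDE; apply: closedI => //; apply: open_closedC; exact: open_interior.
move=> U oU UC; apply/seteqP; split => // x Ux.
have UC' : U `<=` C by move=> y /UC [].
by have [_] := UC _ Ux; apply; move: UC'; rewrite open_subsetE //; apply.
Qed.

Lemma meager_preimage_homeo (phi psi : T -> T) :
  continuous phi -> continuous psi -> cancel phi psi -> cancel psi phi ->
  forall M, meager M -> meager (phi @^-1` M).
Proof.
move=> cphi cpsi phiK psiK M [F [nF MF]].
exists (fun n => phi @^-1` F n); split; last by move=> x /MF.
move=> n; have [cF iF] := nF n; split.
  by move/continuous_closedP: cphi; apply.
move=> V oV VF.
have psiV0 : psi @^-1` V = set0.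
  apply: iF; first by move/continuousP: cpsi; apply.
  by move=> y /= Vy; have := VF _ Vy; rewrite /preimage /= psiK.
rewrite -subset0 => x Vx.
have : (psi @^-1` V) (phi x) by rewrite /preimage /= phiK.
by rewrite psiV0.
Qed.

Hypothesis hausT : hausdorff_space T.
Hypothesis lcT : locally_compact [set: T].

Lemma closed_nowhere_dense_avoid V F :
  open V -> V !=set0 -> closed_nowhere_dense F ->
  exists W, [/\ open W, W !=set0, compact (closure W) & closure W `<=` V `\` F].
Proof.
move=> oV [v Vv] [cF iF].
have oVF : open (V `\` F) by rewrite setDE; apply: openI => //; exact: closed_openC.
have [x [Vx nFx]] : V `\` F !=set0.
  apply: contrapT => VF0; suff V0 : V = set0 by move: Vv; rewrite V0.
  by apply: iF => // y Vy; apply: contrapT => Fy; apply: VF0; exists y.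
have [K Kx [cK clK]] := @lcT x I.
have Kn : nbhs x K by move: Kx; rewrite withinET.
have [i ix ci] :=
  compact_regular hausT cK Kn (open_nbhs_nbhs (conj oVF (conj Vx nFx))).
have sub : closure (i `&` K)° `<=` (V `\` F) `&` K.
  apply: subset_trans (closureS (@interior_subset _ _)) _.
  move=> y cy; split; first by apply: ci; apply: closureS cy => z [].
  by rewrite (closure_id K).1 //; apply: closureS cy => z [].
exists (i `&` K)°; split.
- exact: open_interior.
- by exists x; rewrite /interior; apply: filterI.
- apply: (subclosed_compact _ cK); first exact: closed_closure.
  by move=> y /sub [].
- by move=> y /sub [].
Qed.

(* Baire category theorem: shrink W along a nested sequence of relatively
   compact open sets avoiding the F n; by compactness they share a point. *)
Theorem open_nonmeager W : open W -> W !=set0 -> ~ meager W.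
Proof.
move=> oW W0 [F [nF WF]].
pose P (V : set T) := open V /\ V !=set0.
have : forall p : nat * set T, exists V', P p.2 ->
    [/\ P V', compact (closure V') & closure V' `<=` p.2 `\` F p.1].
  move=> [n V]; have [PV|nPV] := pselect (P V); last by exists V.
  have [V' [? ? ? ?]] := closed_nowhere_dense_avoid PV.1 PV.2 (nF n).
  by exists V' => _; split.
move=> /choice [next hnext].
pose vs := fix vs n := if n is m.+1 then next (m, vs m) else W.
have Pvs n : P (vs n) by elim: n => [|n IH] //=; have [] := hnext (n, vs n) IH.
have vsS n : compact (closure (vs n.+1)) /\ closure (vs n.+1) `<=` vs n `\` F n.
  by have [] := hnext (n, vs n) (Pvs n).
have vs_decr n m : (n <= m)%N -> vs m `<=` vs n.
  move=> /subnK <-; elim: (m - n)%N => [|k IH] //=.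
  by move=> x /subset_closure /(proj2 (vsS _)) [/IH].
pose Fl := filter_from [set: nat] (fun n => vs n.+1).
have FF : ProperFilter Fl.
  apply: filter_from_proper; last by move=> n _; exact: (Pvs n.+1).2.
  apply: filter_from_filter; first by exists 0%N.
  move=> i j _ _; exists (maxn i j) => // x Vx.
  by split; apply: (vs_decr _ _ _ x Vx); rewrite ltnS ?leq_maxl ?leq_maxr.
have [p [_ clp]] :=
  (proj1 (vsS 0%N)) Fl FF (ex_intro2 _ _ 0%N I (@subset_closure _ _)).
have vs_p n : closure (vs n.+1) p by move=> B Bp; apply: clp => //; exists n.
have [n _ Fnp] := WF p (proj1 (proj2 (vsS 0%N) p (vs_p 0%N))).
by have [_] := proj2 (vsS n) p (vs_p n).
Qed.

End Meager.
Arguments meager {T}.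
Arguments closed_nowhere_dense {T}.

Section BaireProperty.
Variable T : topologicalType.

Definition baire_property (A : set T) := exists U, open U /\ meager (A `+` U).

Lemma baire_property_sigma_algebra : sigma_algebra setT baire_property.
Proof.
split.
- by exists set0; split; [exact: open0 | rewrite setY0; exact: meager0].
- move=> A [U [oU mU]]; exists (~` U)°; split; first exact: open_interior.
  apply: (@meagerS _ _ ((A `+` U) `|` (~` U `\` (~` U)°))).
    move=> x [[a nix]|[ix nAx]].
    + have nAx : ~ A x by case: a.
      by have [Ux|nUx] := pselect (U x); [left; right | right].
    + left; left; split; last exact: (interior_subset ix).
      by apply: contrapT => nA; apply: nAx.
  apply: meagerU => //; apply: closed_nowhere_dense_meager.
  by apply: closed_boundary_nowhere_dense; exact: open_closedC.
- move=> A hA; have [U hU] := choice hA.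
  exists (\bigcup_n U n); split.
    by apply: bigcup_open => n _; exact: (hU n).1.
  apply: (@meagerS _ _ (\bigcup_n (A n `+` U n))).
    move=> x [[[n _ Ax] nUx]|[[n _ Ux] nAx]]; exists n => //.
      by left; split => // Unx; apply: nUx; exists n.
    by right; split => // Anx; apply: nAx; exists n.
  by apply: meager_bigcup => n; exact: (hU n).2.
Qed.

Lemma borel_baire_property A :
  <<s [set U : set T | open U] >> A -> baire_property A.
Proof.
apply: smallest_sub; first exact: baire_property_sigma_algebra.
by move=> U oU; exists U; split => //; rewrite setYK; exact: meager0.
Qed.

End BaireProperty.

Lemma open_gt_borel_fun (R : realType) (T : topologicalType) (u : T -> R) :
  (forall t, open [set x | t < u x]) -> borel_fun u.
Proof.
move=> hu B mB.
have [s0 sC sU] := smallest_sigma_algebra setT [set U : set T | open U].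
have : (smallest (sigma_algebra setT) (@ocitv R)) B := mB.
move: B {mB}; apply: smallest_sub.
  split; first by rewrite /= preimage_set0.
    move=> A hA /=; rewrite setTD preimage_setC -setTD; exact: (sC).
  by move=> A hA; rewrite /= preimage_bigcup; exact: (sU).
move=> A [[a b] _ <-] /=.
have -> : u @^-1` `]a, b]%classic = ~` (~` [set x | a < u x] `|` [set x | b < u x]).
  apply/seteqP; split => x /=; rewrite in_itv /=.
    by move=> /andP [h1 h2] []; [|rewrite ltNge h2].
  move=> h; apply/andP; split; first by apply: contrapT => h1; apply: h; left.
  by rewrite leNgt; apply/negP => h1; apply: h; right.
rewrite -setTD; apply: (sC); rewrite -bigcup2E; apply: (sU) => -[|[|n]] /=.
- by rewrite -setTD; apply: (sC); apply: sub_sigma_algebra; exact: hu.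
- by apply: sub_sigma_algebra; exact: hu.
- exact: s0.
Qed.

Lemma finite_set_bounded (R : realType) (T : choiceType) (D : set T) (u : T -> R) :
  finite_set D -> exists B, forall x, D x -> u x <= B.
Proof.
move=> /finite_fsetP [X ->].
suff [B hB] : exists B, forall x, x \in finmap.enum_fset X -> u x <= B.
  by exists B => x /= xX; apply: hB.
elim: (finmap.enum_fset X) => [|a s [B hB]]; first by exists 0.
exists (Num.max (u a) B) => x; rewrite in_cons => /orP [/eqP ->|/hB h].
  by rewrite le_max lexx.
by rewrite le_max h orbT.
Qed.

Section Quotient.
Variables (G : topologicalType) (mul : G -> G -> G) (H : set G).

Lemma compact_qcompact X : compact X -> qcompact mul H X.
Proof.
move=> cX I F qF XF; apply: contrapT => nfin.
pose Fl := filter_from [set D : set I | finite_set D]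
  (fun D => X `\` \bigcup_(i in D) F i).
have FF : ProperFilter Fl.
  apply: filter_from_proper.
    apply: filter_from_filter; first by exists set0; exact: finite_set0.
    move=> D1 D2 f1 f2; exists (D1 `|` D2); first by rewrite /= finite_setU.
    move=> y [Xy ny]; split; split => // -[i Di Fy]; apply: ny; exists i => //.
      by left.
    by right.
  move=> D fD; apply: contrapT => ne; apply: nfin; exists D; split => //.
  by move=> y Xy; apply: contrapT => ny; apply: ne; exists y.
have FX : Fl X by exists set0; [exact: finite_set0 | move=> y []].
have [p [Xp clp]] := cX Fl FF FX.
have [i _ Fip] := XF p Xp.
have Fin : nbhs p (F i) by apply: open_nbhs_nbhs; split => //; exact: (qF i).1.
have [y [[Xy ny] Fy]] :=
  clp _ _ (ex_intro2 _ _ [set i] (finite_set1 i) (fun z h => h)) Fin.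
by apply: ny; exists i.
Qed.

Lemma qclosure_closed A : closed (qclosure mul H A).
Proof.
move=> g cg U [oU sU] Ug.
have [y [qy Uy]] := cg U (open_nbhs_nbhs (conj oU Ug)).
exact: qy U (conj oU sU) Uy.
Qed.

Lemma qclosure_min A B : closed B -> saturated mul H (~` B) -> A `<=` B ->
  qclosure mul H A `<=` B.
Proof.
move=> cB sB AB g qg; apply: contrapT => nBg.
have [z [nBz Az]] := qg (~` B) (conj (closed_openC cB) sB) nBg.
exact: nBz (AB _ Az).
Qed.

End Quotient.

Definition sublevel (T : Type) (R : realType) (u : T -> R) (n : nat) :=
  u @^-1` [set x | x <= n%:R].

Section Group.
Variables (G : topologicalType) (mul : G -> G -> G) (inv : G -> G) (e : G).
Hypothesis hG : is_lc_group mul inv e.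

Lemma gmulA x y z : mul x (mul y z) = mul (mul x y) z.
Proof. by case: hG. Qed.
Lemma gmul1l x : mul e x = x.
Proof. by case: hG => _ [/(_ x) []]. Qed.
Lemma gmul1r x : mul x e = x.
Proof. by case: hG => _ [/(_ x) []]. Qed.
Lemma gmulVl x : mul (inv x) x = e.
Proof. by case: hG => _ [_ [/(_ x) []]]. Qed.
Lemma gmulVr x : mul x (inv x) = e.
Proof. by case: hG => _ [_ [/(_ x) []]]. Qed.
Lemma gmulKl x y : mul (inv x) (mul x y) = y.
Proof. by rewrite gmulA gmulVl gmul1l. Qed.
Lemma gmulKVl x y : mul x (mul (inv x) y) = y.
Proof. by rewrite gmulA gmulVr gmul1l. Qed.
Lemma gmulKr x y : mul (mul x y) (inv y) = x.
Proof. by rewrite -gmulA gmulVr gmul1r. Qed.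
Lemma gmulKVr x y : mul (mul x (inv y)) y = x.
Proof. by rewrite -gmulA gmulVl gmul1r. Qed.
Lemma ginvK x : inv (inv x) = x.
Proof. by rewrite -[RHS](gmulKl (inv x)) gmulVl gmul1r. Qed.
Lemma ginvM x y : inv (mul x y) = mul (inv y) (inv x).
Proof.
rewrite -[RHS]gmul1r -(gmulVr (mul x y)) [mul (inv y) (inv x)]lock gmulA.
by rewrite -lock -(gmulA (inv y)) (gmulA (inv x)) gmulVl gmul1l gmulVl gmul1l.
Qed.

Lemma gmul_continuous : continuous (fun p : G * G => mul p.1 p.2).
Proof. by case: hG => _ [_ [_ []]]. Qed.
Lemma ginv_continuous : continuous inv.
Proof. by case: hG => _ [_ [_ [_ []]]]. Qed.
Lemma lc_group_hausdorff : hausdorff_space G.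
Proof. by case: hG => _ [_ [_ [_ [_ []]]]]. Qed.
Lemma lc_group_locally_compact : locally_compact [set: G].
Proof. by case: hG => _ [_ [_ [_ [_ []]]]]. Qed.

Lemma lmul_continuous a : continuous (mul a).
Proof.
move=> y; apply: (@continuous_comp _ _ _ (fun z => (a, z)) (fun p => mul p.1 p.2));
  last exact: gmul_continuous.
by apply: cvg_pair; [exact: cvg_cst | exact: cvg_id].
Qed.

Lemma rmul_continuous a : continuous (mul^~ a).
Proof.
move=> y; apply: (@continuous_comp _ _ _ (fun z => (z, a)) (fun p => mul p.1 p.2));
  last exact: gmul_continuous.
by apply: cvg_pair; [exact: cvg_id | exact: cvg_cst].
Qed.

Lemma nbhs_gmul x y N : nbhs (mul x y) N ->
  exists P Q, [/\ nbhs x P, nbhs y Q & forall p q, P p -> Q q -> N (mul p q)].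
Proof.
move=> Nn; have := @gmul_continuous (x, y) _ Nn => /= -[[P Q] /= [Px Qy] PQ].
by exists P, Q; split => // p q Pp Qq; exact: (PQ (p, q)).
Qed.

(* Modulo meager sets, the nonempty open set U `&` U g^-1 is A `&` A g^-1. *)
Lemma baire_approx_rtranslate (A U : set G) g : open U -> meager (A `+` U) ->
  (exists y, U y /\ U (mul y g)) -> exists z, A z /\ A (mul z g).
Proof.
move=> oU mAU [y [Uy Uyg]]; apply: contrapT => nA.
apply: (open_nonmeager lc_group_hausdorff lc_group_locally_compact
  (W := U `&` (mul^~ g) @^-1` U)).
- by apply: openI => //; move/continuousP: (@rmul_continuous g); apply.
- by exists y.
apply: (@meagerS _ _ ((A `+` U) `|` (mul^~ g) @^-1` (A `+` U))).
  move=> z [Uz Uzg]; have [Az|nAz] := pselect (A z); last by left; right.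
  by right; right; split => // Azg; apply: nA; exists z.
apply: meagerU => //.
apply: (meager_preimage_homeo (@rmul_continuous g) (@rmul_continuous (inv g)))
  => //.
- by move=> z; rewrite /= gmulKr.
- by move=> z; rewrite /= gmulKVr.
Qed.

Section Length.
Variables (R : realType) (l : G -> R).
Hypothesis hl : length_fun mul inv e l.

Lemma len_ge0 x : 0 <= l x. Proof. by case: hl. Qed.
Lemma len_e : l e = 0. Proof. by case: hl. Qed.
Lemma len_inv x : l (inv x) = l x.
Proof. by case: hl => _ _ _ h _; rewrite [RHS]h. Qed.
Lemma len_mul x y : l (mul x y) <= l x + l y. Proof. by case: hl. Qed.

Lemma sublevel_baire_property n : baire_property (sublevel l n).
Proof.
apply: borel_baire_property; case: hl => + _ _ _ _; apply.
rewrite (_ : [set x | x <= n%:R] = `]-oo, n%:R]%classic).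
  exact: measurable_itv.
by apply/seteqP; split => x /=; rewrite in_itv.
Qed.

Lemma sublevel_cover x : exists n, sublevel l n x.
Proof. by exists (Num.Def.archi_bound (l x)); apply/ltW/archi_boundP/len_ge0. Qed.

Lemma sublevel_baire_nonmeager :
  exists n U, [/\ open U, U !=set0 & meager (sublevel l n `+` U)].
Proof.
have [U hU] := choice sublevel_baire_property.
suff [n Un] : exists n, U n !=set0 by exists n, (U n); case: (hU n).
apply: contrapT => U0.
apply: (open_nonmeager lc_group_hausdorff lc_group_locally_compact openT
  (ex_intro _ e I)).
apply: (@meagerS _ _ (\bigcup_n (sublevel l n `+` U n))).
  move=> x _; have [n hn] := sublevel_cover x.
  by exists n => //; left; split => // Unx; apply: U0; exists n, x.
by apply: meager_bigcup => k; exact: (hU k).2.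
Qed.

(* For x near the identity, a nonmeager sublevel set L meets L x^-1, which
   writes x as a quotient of two elements of L. *)
Lemma len_bounded_near_unit :
  exists O C, [/\ open O, O e, 0 <= C & forall x, O x -> l x <= C].
Proof.
have [n [U [oU [u Uu] mU]]] := sublevel_baire_nonmeager.
exists (mul u @^-1` U), (n%:R + n%:R); split.
- by move/continuousP: (@lmul_continuous u); apply.
- by rewrite /= gmul1r.
- by rewrite addr_ge0.
move=> x Uux.
have [z [Lz Lzx]] : exists z, sublevel l n z /\ sublevel l n (mul z (inv x)).
  by apply: baire_approx_rtranslate mU _ => //; exists (mul u x); rewrite gmulKr.
have -> : x = mul (inv (mul z (inv x))) z by rewrite ginvM ginvK gmulKVr.
by apply: le_trans (len_mul _ _) _; rewrite len_inv addrC lerD.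
Qed.

Section Envelope.
Variable H : set G.
Hypothesis hH : is_compact_subgroup mul inv e H.
Variable M : R.
Hypothesis hM : forall h, H h -> l h <= M.

Lemma subgroup1 : H e. Proof. by case: hH. Qed.
Lemma subgroupM x y : H x -> H y -> H (mul x y).
Proof. by case: hH => _ + _ _; apply. Qed.
Lemma subgroupV x : H x -> H (inv x). Proof. by case: hH => _ _ + _; apply. Qed.
Lemma subgroup_compact : compact H. Proof. by case: hH. Qed.
Lemma bound_ge0 : 0 <= M.
Proof. by apply: le_trans (hM subgroup1); rewrite len_e. Qed.

(* [env] is the lower semicontinuous envelope of
   g |-> sup_(h, h' in H) l (h g h'). *)
Definition env_lb g := [set t : R | exists h h' N, [/\ H h, H h',
  nbhs (mul (mul h g) h') N & forall y, N y -> t <= l y]].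
Definition env g := sup (env_lb g).

Lemma env_lb0 g : env_lb g 0.
Proof.
exists e, e, setT; split; [exact: subgroup1 | exact: subgroup1 | exact: filterT |].
by move=> y _; exact: len_ge0.
Qed.

Lemma env_lb_le g t : env_lb g t -> t <= l g + (M + M).
Proof.
move=> [h [h' [N [Hh Hh' Nn Nb]]]].
apply: le_trans (Nb _ (nbhs_singleton Nn)) _.
apply: le_trans (len_mul _ _) _; have := hM Hh'; have := hM Hh.
by have := len_mul h g; lra.
Qed.

Lemma has_sup_env_lb g : has_sup (env_lb g).
Proof.
by split; [exists 0; exact: env_lb0 | exists (l g + (M + M)) => t /env_lb_le].
Qed.

Lemma env_ge_lb g t : env_lb g t -> t <= env g.
Proof. exact: sup_upper_bound (has_sup_env_lb g) _. Qed.

Lemma env_le g : env g <= l g + (M + M).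
Proof. by apply: ge_sup; [exists 0; exact: env_lb0 | move=> t /env_lb_le]. Qed.

Lemma env_ge0 g : 0 <= env g.
Proof. exact: env_ge_lb (env_lb0 g). Qed.

Lemma env_le_env g k : env_lb g `<=` env_lb k -> env g <= env k.
Proof.
move=> gk; apply: ge_sup; first by exists 0; exact: env_lb0.
by move=> t /gk /env_ge_lb.
Qed.

Lemma env_mull h g : H h -> env (mul h g) <= env g.
Proof.
move=> Hh; apply: env_le_env => t [h1 [h2 [N [Hh1 Hh2 Nn Nb]]]].
exists (mul h1 h), h2, N; split => //; first exact: subgroupM.
by rewrite -(gmulA h1 h g).
Qed.

Lemma env_mulr h g : H h -> env (mul g h) <= env g.
Proof.
move=> Hh; apply: env_le_env => t [h1 [h2 [N [Hh1 Hh2 Nn Nb]]]].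
exists h1, (mul h h2), N; split => //; first exact: subgroupM.
by rewrite gmulA -(gmulA h1 g h).
Qed.

Lemma env_lb_inv g : env_lb g `<=` env_lb (inv g).
Proof.
move=> t [h [h' [N [Hh Hh' Nn Nb]]]].
exists (inv h'), (inv h), (inv @^-1` N).
split; [exact: subgroupV | exact: subgroupV | |].
  rewrite -gmulA -!ginvM; apply: ginv_continuous; by rewrite ginvK.
by move=> y Ny; rewrite -len_inv; exact: Nb.
Qed.

Lemma env_inv g : env (inv g) = env g.
Proof.
apply/eqP; rewrite eq_le; apply/andP; split; apply: env_le_env.
  by rewrite -{2}(ginvK g); exact: env_lb_inv.
exact: env_lb_inv.
Qed.

Lemma env_open_gt t : open [set g | t < env g].
Proof.
rewrite openE => g /=; rewrite -subr_gt0 => tg.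
have [s [h [h' [N [Hh Hh' Nn Nb]]]] ts] := sup_adherent tg (has_sup_env_lb g).
have Ng : nbhs g ((mul^~ h' \o mul h) @^-1` N°).
  exact: continuous_comp (@lmul_continuous h g) (@rmul_continuous h' _) _
    (nbhs_interior Nn).
apply: filterS Ng => y /= Ny.
have /env_ge_lb : env_lb y s by exists h, h', N.
by move: ts; rewrite opprB addrC subrK; apply: lt_le_trans.
Qed.

Lemma env_near h h' g P eps : H h -> H h' -> nbhs (mul (mul h g) h') P -> 0 < eps ->
  exists2 p, P p & l p < env g + eps.
Proof.
move=> Hh Hh' Pn eps0; apply: contrapT => np.
have /env_ge_lb : env_lb g (env g + eps).
  exists h, h', P; split => // y Py; rewrite leNgt; apply/negP => ly.
  by apply: np; exists y.
by rewrite leNgt ltrDl eps0.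
Qed.

Lemma env_mul g k : env (mul g k) <= env g + env k.
Proof.
apply: ge_sup; first by exists 0; exact: env_lb0.
move=> t [h [h' [N [Hh Hh' Nn Nb]]]]; apply/ler_addgt0Pr => eps eps0.
have : nbhs (mul (mul (mul h g) e) (mul (mul e k) h')) N.
  by rewrite gmul1r gmul1l gmulA -(gmulA h g k).
move=> /nbhs_gmul [P [Q [Pn Qn PQ]]].
have eps20 : 0 < eps / 2 by rewrite divr_gt0.
have [p Pp lp] := env_near Hh subgroup1 Pn eps20.
have [q Qq lq] := env_near subgroup1 Hh' Qn eps20.
by have := Nb _ (PQ _ _ Pp Qq); have := len_mul p q; lra.
Qed.

Definition pair_len g := if pselect (H g) then 0 else env g.

Lemma pair_len_subgroup g : H g -> pair_len g = 0.
Proof. by rewrite /pair_len; case: pselect. Qed.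
Lemma pair_len_env g : ~ H g -> pair_len g = env g.
Proof. by rewrite /pair_len; case: pselect. Qed.
Lemma pair_len_ge0 g : 0 <= pair_len g.
Proof. by rewrite /pair_len; case: pselect => [Hg|nHg] //; exact: env_ge0. Qed.

Lemma pair_len_le g : pair_len g <= l g + (M + M).
Proof.
rewrite /pair_len; case: pselect => [Hg|nHg] /=; last exact: env_le.
by have := len_ge0 g; have := bound_ge0; lra.
Qed.

Lemma pair_len_open_gt t : open [set g | t < pair_len g].
Proof.
have [t0|t0] := ltP t 0.
  rewrite (_ : [set g | t < pair_len g] = setT); first exact: openT.
  by apply/seteqP; split => g // _ /=; apply: lt_le_trans t0 (pair_len_ge0 g).
rewrite (_ : [set g | t < pair_len g] = ~` H `&` [set g | t < env g]).
  apply: openI; last exact: env_open_gt.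
  exact/closed_openC/(compact_closed lc_group_hausdorff)/subgroup_compact.
apply/seteqP; split => g /=; last by move=> [nH tf]; rewrite pair_len_env.
rewrite /pair_len; case: pselect => Hg /= tl; last by split.
by move: t0; rewrite leNgt tl.
Qed.

Lemma pair_len_mul g k : pair_len (mul g k) <= pair_len g + pair_len k.
Proof.
have [Hgk|nHgk] := pselect (H (mul g k)).
  by rewrite pair_len_subgroup // addr_ge0 // pair_len_ge0.
rewrite pair_len_env //.
have [Hg|nHg] := pselect (H g); have [Hk|nHk] := pselect (H k).
- by exfalso; apply: nHgk; exact: subgroupM.
- by rewrite (pair_len_subgroup Hg) (pair_len_env nHk) add0r; exact: env_mull.
- by rewrite (pair_len_subgroup Hk) (pair_len_env nHg) addr0; exact: env_mulr.
- by rewrite !pair_len_env //; exact: env_mul.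
Qed.

Lemma pair_len_inv g : pair_len g = pair_len (inv g).
Proof.
have [Hg|nHg] := pselect (H g).
  by rewrite !pair_len_subgroup //; exact: subgroupV.
rewrite (pair_len_env nHg) pair_len_env ?env_inv //.
by move=> /subgroupV; rewrite ginvK.
Qed.

Lemma pair_len_length_fun : length_fun mul inv e pair_len.
Proof.
split.
- exact: open_gt_borel_fun pair_len_open_gt.
- exact: pair_len_ge0.
- exact: pair_len_subgroup subgroup1.
- exact: pair_len_inv.
- exact: pair_len_mul.
Qed.

Lemma pair_len_mull h g : H h -> pair_len (mul h g) = pair_len g.
Proof.
move=> Hh; apply/eqP; rewrite eq_le; apply/andP; split.
  by apply: le_trans (pair_len_mul _ _) _; rewrite pair_len_subgroup // add0r.
rewrite -{1}(gmulKl h g).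
apply: le_trans (pair_len_mul _ _) _.
by rewrite pair_len_subgroup ?add0r //; exact: subgroupV.
Qed.

Definition subgroup_mul (K : set G) := [set mul x.1 x.2 | x in H `*` K].

Lemma compact_subgroup_mul K : compact K -> compact (subgroup_mul K).
Proof.
move=> cK; apply: continuous_compact; last exact: compact_setX subgroup_compact cK.
exact: continuous_subspaceT gmul_continuous.
Qed.

Lemma subgroup_mul_saturated K : saturated mul H (~` subgroup_mul K).
Proof.
move=> h g Hh nHKg [[a b] [Ha Kb] /= abhg]; apply: nHKg.
exists (mul (inv h) a, b).
  by split => //; apply: subgroupM => //; exact: subgroupV.
by rewrite /= -gmulA abhg gmulKl.
Qed.

Lemma pair_len_loc_bounded : loc_bounded l -> loc_bounded pair_len.
Proof.
move=> lb K cK; have [B hB] := lb K cK; exists (B + (M + M)) => g Kg.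
by have := pair_len_le g; have := hB g Kg; lra.
Qed.

Section NearUnit.
Variables (O : set G) (C : R).
Hypothesis hOC : [/\ open O, O e, 0 <= C & forall x, O x -> l x <= C].

Lemma env_ge_len g : l g <= env g + C.
Proof.
case: hOC => oO Oe C0 OC.
suff /env_ge_lb : env_lb g (l g - C) by lra.
exists e, e, (mul (inv g) @^-1` O).
split; [exact: subgroup1 | exact: subgroup1 | |].
  rewrite gmul1l gmul1r; apply: open_nbhs_nbhs; split; last by rewrite /= gmulVl.
  by move/continuousP: (@lmul_continuous (inv g)); apply.
move=> y /= Oy.
have : l (mul (inv y) g) <= C by rewrite -len_inv ginvM ginvK; apply: OC.
by have := len_mul y (mul (inv y) g); rewrite gmulKVl; lra.
Qed.

Lemma len_le_pair_len g : l g <= pair_len g + (M + C).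
Proof.
have := bound_ge0; case: hOC => _ _ C0 _.
have [Hg|nHg] := pselect (H g).
  by rewrite pair_len_subgroup // add0r; have := hM Hg; lra.
by rewrite pair_len_env //; have := env_ge_len g; lra.
Qed.

Lemma pair_len_equiv : equiv_length l pair_len.
Proof.
have := bound_ge0; case: hOC => _ _ C0 _ M0.
exists (M + M + C), 1; split => //.
- by rewrite !addr_ge0.
- by move=> g; rewrite mul1r; have := pair_len_le g; lra.
- by move=> g; rewrite mul1r; have := len_le_pair_len g; lra.
Qed.

(* A compact subset of H\G is covered by finitely many images of translates g O. *)
Lemma pair_len_loc_bounded_pair : loc_bounded_pair mul H pair_len.
Proof.
case: hOC => oO Oe C0 OC S satS qS.
pose F (g : G) := [set y | exists2 h, H h & O (mul (inv g) (mul h y))].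
have qF g : qopen mul H (F g).
  split; last first.
    move=> h0 y Hh0 [h Hh Oy]; exists (mul h (inv h0)).
      by apply: subgroupM => //; exact: subgroupV.
    by rewrite -gmulA gmulKl.
  rewrite openE => y [h Hh Oy].
  have oP : open ((mul (inv g) \o mul h) @^-1` O).
    have c : continuous (mul (inv g) \o mul h).
      by move=> z; apply: continuous_comp; exact: lmul_continuous.
    by move/continuousP: c; apply.
  by apply: filterS (open_nbhs_nbhs (conj oP Oy)) => z Oz; exists h.
have cover : S `<=` \bigcup_(g in [set: G]) F g.
  move=> y _; exists y => //; exists e; first exact: subgroup1.
  by rewrite gmul1l gmulVl.
have [D [fD SD]] := qS G F qF cover.
have [B hB] := finite_set_bounded pair_len fD.
exists (B + (C + (M + M))) => y /SD [g Dg [h Hh Oz]].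
rewrite -(pair_len_mull y Hh) -(gmulKVl g (mul h y)).
apply: le_trans (pair_len_mul _ _) _.
have := pair_len_le (mul (inv g) (mul h y)).
by have := hB g Dg; have := OC _ Oz; lra.
Qed.

Lemma pair_len_sublevel n : exists N, sublevel pair_len n `<=` sublevel l N.
Proof.
have := bound_ge0; case: hOC => _ _ C0 _ M0.
have ge0 : 0 <= n%:R + (M + C) :> R by rewrite !addr_ge0.
exists (Num.Def.archi_bound (n%:R + (M + C))) => g; rewrite /sublevel /= => lg.
by have := len_le_pair_len g; have := archi_boundP ge0; lra.
Qed.

Lemma pair_len_proper : proper_len l -> proper_len pair_len.
Proof.
move=> pl n; have [N sub] := pair_len_sublevel n.
by apply: (subclosed_compact _ (pl N)); [exact: closed_closure | exact: closureS].
Qed.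

Lemma pair_len_proper_pair : proper_len l -> proper_len_pair mul H pair_len.
Proof.
move=> pl n; have [N sub] := pair_len_sublevel n.
have cHK := compact_subgroup_mul (pl N).
apply/compact_qcompact/(subclosed_compact _ cHK); first exact: qclosure_closed.
apply: qclosure_min.
- exact: compact_closed lc_group_hausdorff cHK.
- exact: subgroup_mul_saturated.
- move=> z /sub Lz; exists (e, z); last exact: gmul1l.
  by split; [exact: subgroup1 | exact: subset_closure].
Qed.

End NearUnit.
End Envelope.
End Length.
End Group.

Theorem lemma2p8 (R : realType) (G : topologicalType) (mul : G -> G -> G)
  (inv : G -> G) (e : G) (H : set G) (l : G -> R) :
  is_lc_group mul inv e ->
  is_compact_subgroup mul inv e H ->
  length_fun mul inv e l ->
  (exists M : R, forall h, H h -> l h <= M) ->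
  exists l' : G -> R,
    [/\ length_fun mul inv e l',
        equiv_length l l',
        (forall h, H h -> l' h = 0),
        (loc_bounded l -> loc_bounded l' /\ loc_bounded_pair mul H l') &
        (proper_len l -> proper_len l' /\ proper_len_pair mul H l')].
Proof.
move=> hG hH hl [M hM].
have [V [c hVc]] := len_bounded_near_unit hG hl.
exists (pair_len mul l H); split.
- exact: (pair_len_length_fun hG hl hH hM).
- exact: (pair_len_equiv hG hl hH hM hVc).
- exact: pair_len_subgroup.
- move=> lb; split; first exact: (pair_len_loc_bounded hl hH hM lb).
  exact: (pair_len_loc_bounded_pair hG hl hH hM hVc).
- move=> pl; split; first exact: (pair_len_proper hG hl hH hM hVc pl).
  exact: (pair_len_proper_pair hG hl hH hM hVc pl).
Qed.
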